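(* Let $P_{Y|X}$ be a BISO channel with output alphabet $\{0,\pm1,\dots,\pm l\}$ and transition probabilities $p_y=P_{Y|X}(y|0)=P_{Y|X}(-y|1)$. Then $$\eta_{KL}(P)=\sum_{y>0}\frac{(p_y-p_{-y})^2}{p_y+p_{-y}},$$ where summands with $p_y+p_{-y}=0$ are taken to be $0$.
   Context: A binary-input symmetric-output (BISO) channel is a channel $P_{Y|X}$ with input alphabet $\{0,1\}$ and finite output alphabet $\mathcal Y=\{0,\pm1,\dots,\pm l\}$ for some integer $l\ge 1$ (some transition probabilities may be zero), such that $P_{Y|X}(y|0)=P_{Y|X}(-y|1)=:p_y$ for all $y\in\mathcal Y$. For a channel $P=P_{Y|X}$ and an input distribution $P_X$, write $P\circ P_X$ for the induced output distribution. The KL contraction coefficient is $\eta_{KL}(P)=\sup_{P_X,Q_X}\frac{D(P\circ P_X\|P\circ Q_X)}{D(P_X\|Q_X)}$, the supremum over input distributions with $0<D(P_X\|Q_X)<\infty$, where $D$ is the Kullback–Leibler divergence. *)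

From HB Require Import structures.
From mathcomp Require Import all_boot all_order all_algebra.
From mathcomp Require Import all_classical all_reals all_analysis.
Set Implicit Arguments. Unset Strict Implicit. Unset Printing Implicit Defensive.
Import Order.TTheory GRing.Theory Num.Theory.
Local Open Scope ring_scope.
Local Open Scope classical_set_scope.

Section Defs.
Variable R : realType.

Definition outs (l : nat) : seq int :=
  [seq (i%:Z - l%:Z)%R | i <- iota 0 (2 * l + 1)].

(** [p] is a BISO channel on output alphabet outs l: p y = P(y|0) = P(-y|1),
    and P(.|0) is a probability distribution on the alphabet. *)
Definition biso (l : nat) (p : int -> R) : Prop :=
  (1 <= l)%N /\ (forall y, y \in outs l -> 0 <= p y) /\ \sum_(y <- outs l) p y = 1.

(** Transition probabilities P_{Y|X}(y|x); input 0 is [false], input 1 is [true]. *)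
Definition chan (p : int -> R) (x : bool) (y : int) : R :=
  if x then p (- y) else p y.

Definition bin_dist (PX : bool -> R) : Prop :=
  0 <= PX false /\ 0 <= PX true /\ PX false + PX true = 1.

Definition out_dist (p : int -> R) (PX : bool -> R) (y : int) : R :=
  \sum_(x <- [:: false; true]) PX x * chan p x y.

(** Absolute continuity P << Q on the finite alphabet s; equivalent to D(P||Q) < oo. *)
Definition abs_cont {T : eqType} (s : seq T) (P Q : T -> R) : Prop :=
  forall x, x \in s -> Q x = 0 -> P x = 0.

(** KL divergence on the finite alphabet s (value when P << Q; 0 ln 0 = 0). *)
Definition KL {T : eqType} (s : seq T) (P Q : T -> R) : R :=
  \sum_(x <- s | P x != 0) P x * ln (P x / Q x).

Definition KL_ratios (l : nat) (p : int -> R) : set R :=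
  [set r | exists PX QX : bool -> R,
      [/\ bin_dist PX, bin_dist QX, abs_cont [:: false; true] PX QX,
          0 < KL [:: false; true] PX QX &
          r = KL (outs l) (out_dist p PX) (out_dist p QX)
              / KL [:: false; true] PX QX]].

Definition eta_KL (l : nat) (p : int -> R) : R := sup (KL_ratios l p).

Definition biso_formula (l : nat) (p : int -> R) : R :=
  \sum_(1 <= i < l.+1)
     (if p i%:Z + p (- i%:Z) == 0 then 0
      else (p i%:Z - p (- i%:Z)) ^+ 2 / (p i%:Z + p (- i%:Z))).

End Defs.

(* Parametrize a law on {0, 1} by its bias x, the mass of 0 being (1 + x)/2,
   and let d(x, y) be the divergence between biases x and y.  Grouping each
   output y > 0 with -y, a BISO channel acts on the pair as a binary symmetric
   channel multiplying the bias by θ_y = (p_y - p_-y)/(p_y + p_-y), so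
   D(P∘P_X || P∘Q_X) = Σ_{y>0} (p_y + p_-y) d(θ_y x, θ_y x').
   The contraction d(a x, a x') <= a^2 d(x, x') for |a| <= 1, proved with the
   mean value theorem in x', bounds every ratio by Σ (p_y + p_-y) θ_y^2; the
   bounds e^2/2 <= d(e, 0) <= e^2/(2 (1 - e^2)) show that input biases e and 0
   approach this value as e -> 0. *)

From HB Require Import structures.
From mathcomp Require Import all_boot all_order all_algebra.
From mathcomp Require Import all_classical all_reals all_analysis.
From mathcomp Require Import ring lra zify.
Set Implicit Arguments. Unset Strict Implicit. Unset Printing Implicit Defensive.
Import Order.TTheory GRing.Theory Num.Theory.
Local Open Scope ring_scope.
Import numFieldNormedType.Exports.
Local Open Scope classical_set_scope.

Section RealAnalysis.
Variable R : realType.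
Implicit Types (f df : R -> R) (x y t : R).

Lemma MVT_between f df x y : x != y ->
  (forall t, (x < t < y) || (y < t < x) -> is_derive t 1 f (df t)) ->
  (forall t, (x <= t <= y) || (y <= t <= x) -> {for t, continuous f}) ->
  exists2 c, (x < c < y) || (y < c < x) & f y - f x = df c * (y - x).
Proof.
move=> xy hd hc.
have mvt u v : u < v -> (forall t, u < t < v -> is_derive t 1 f (df t)) ->
    (forall t, u <= t <= v -> {for t, continuous f}) ->
    exists2 c, u < c < v & f v - f u = df c * (v - u).
  move=> uv hd_uv hc_uv.
  have hd_itv t : t \in `]u, v[%R -> is_derive t 1 f (df t).
    by rewrite in_itv; exact: hd_uv.
  have hc_itv : {within `[u, v], continuous f}.
    by apply: continuous_in_subspaceT => t; rewrite inE /= in_itv; exact: hc_uv.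
  by have [c] := MVT uv hd_itv hc_itv; rewrite in_itv; exists c.
have [lt_xy|lt_yx|eq_xy] := ltgtP x y; last by rewrite eq_xy eqxx in xy.
- have [c cxy e] : exists2 c, x < c < y & f y - f x = df c * (y - x).
    by apply: mvt => // t h; [apply: hd | apply: hc]; rewrite h.
  by exists c; rewrite ?cxy.
- have [c cyx e] : exists2 c, y < c < x & f x - f y = df c * (x - y).
    by apply: mvt => // t h; [apply: hd | apply: hc]; rewrite h orbT.
  by exists c; [rewrite cyx orbT | rewrite -opprB e -mulrN opprB].
Qed.

Lemma ge0_derive_away f df x y :
  (forall t, (x < t < y) || (y < t < x) -> is_derive t 1 f (df t)) ->
  (forall t, (x < t < y) || (y < t < x) -> 0 <= (t - x) * df t) ->
  (forall t, (x <= t <= y) || (y <= t <= x) -> {for t, continuous f}) ->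
  f x = 0 -> 0 <= f y.
Proof.
move=> hd hsign hc fx0; have [<- | xy] := eqVneq x y; first by rewrite fx0.
have [c cxy] := MVT_between xy hd hc; rewrite fx0 subr0 => ->.
have := hsign c cxy; have : 0 < (c - x) * (y - x).
  by case/orP: cxy => /andP[? ?]; nra.
nra.
Qed.

Lemma is_derive_continuous f t d : is_derive t 1 f d -> {for t, continuous f}.
Proof. by case=> hf _; exact/differentiable_continuous/derivable1_diffP. Qed.

Lemma is_derive_scaled_ln (k : R) f t d : is_derive t 1 f d -> 0 < f t ->
  is_derive t 1 (fun s => k * ln (f s)) (k * (d / f t)).
Proof.
move=> hf ft; have := is_deriveZ k (is_derive1_comp (is_derive1_ln ft) hf).
by move=> ?; apply: is_derive_eq; rewrite [_ / _]mulrC.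
Qed.

Lemma continuous_scaled_ln (k : R) f t d : is_derive t 1 f d ->
  (k = 0 \/ 0 < f t) -> {for t, continuous (fun s => k * ln (f s))}.
Proof.
move=> hf [->|ft]; last exact: is_derive_continuous (is_derive_scaled_ln k hf ft).
rewrite (_ : (fun s => 0 * _) = cst 0); first exact: cst_continuous.
by apply/funext => s; rewrite mul0r.
Qed.

Lemma sup_eq_approx (S : set R) (M : R) : ubound S M ->
  (forall d, 0 < d -> exists2 r, S r & M - d <= r) -> sup S = M.
Proof.
move=> S_le_M approx; have [r Sr _] := approx 1 ltr01.
have S_ne : S !=set0 by exists r.
apply/eqP; rewrite eq_le ge_sup //=; apply/ler_addgt0Pr => d d_gt0.
have [r' Sr' ler'] := approx d d_gt0.
by rewrite -lerBlDr (le_trans ler') // ub_le_sup //; exists M.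
Qed.

End RealAnalysis.

Section BinaryDivergence.
Variable R : realType.
Implicit Types (u v x y a c t : R).

Definition kl_term u v := u * ln (u / v).

Definition bin_kl x y :=
  kl_term ((1 + x) / 2) ((1 + y) / 2) + kl_term ((1 - x) / 2) ((1 - y) / 2).

Definition bin_kl_expanded x y :=
  (1 + x) / 2 * ln (1 + x) + (1 - x) / 2 * ln (1 - x)
  - (1 + x) / 2 * ln (1 + y) - (1 - x) / 2 * ln (1 - y).

Lemma kl_term_same u : kl_term u u = 0.
Proof.
by rewrite /kl_term; have [->|u0] := eqVneq u 0; rewrite ?mul0r // divff // ln1 mulr0.
Qed.

Lemma kl_termZ w u v : w != 0 -> kl_term (w * u) (w * v) = w * kl_term u v.
Proof.
move=> w0; rewrite /kl_term -mulrA; congr (_ * (_ * ln _)).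
by rewrite invfM mulrACA divff // mul1r.
Qed.

Lemma bin_kl_same x : bin_kl x x = 0.
Proof. by rewrite /bin_kl !kl_term_same addr0. Qed.

Lemma bin_klNN x y : bin_kl (- x) (- y) = bin_kl x y.
Proof. by rewrite /bin_kl !opprK addrC. Qed.

Lemma kl_term_half u v : 0 <= u -> (u = 0 \/ 0 < v) ->
  kl_term (u / 2) (v / 2) = u / 2 * ln u - u / 2 * ln v.
Proof.
move=> u0 [->|v0]; first by rewrite /kl_term !mul0r subrr.
have [->|uN0] := eqVneq u 0; first by rewrite /kl_term !mul0r subrr.
have u_gt0 : 0 < u by rewrite lt_neqAle eq_sym uN0.
by rewrite /kl_term -mulrBr -ln_div ?posrE //; congr (_ * ln _); field; rewrite gt_eqF.
Qed.

Lemma bin_klE x y : -1 <= x <= 1 -> (x = -1 \/ -1 < y) -> (x = 1 \/ y < 1) ->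
  bin_kl x y = bin_kl_expanded x y.
Proof.
move=> /andP[x1 x2] hy1 hy2.
by rewrite /bin_kl /bin_kl_expanded !kl_term_half; lra.
Qed.

Lemma bin_kl_expanded_lnE c a :
  (fun s => bin_kl_expanded c (a * s)) =
  cst (bin_kl_expanded c 0) + (fun s => - ((1 + c) / 2) * ln (1 + a * s))
  + (fun s => - ((1 - c) / 2) * ln (1 - a * s)).
Proof.
by apply/funext => s; rewrite /bin_kl_expanded addr0 subr0 ln1 !mulr0 !fctE; lra.
Qed.

Lemma is_derive_affine a t : is_derive t 1 (fun s : R => 1 + a * s) a
  * is_derive t 1 (fun s : R => 1 - a * s) (- a).
Proof. by split; apply: is_derive_eq; rewrite add0r mul1r scaler1. Qed.

Lemma is_derive_bin_kl_expanded c a t : -1 < a * t < 1 ->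
  is_derive t 1 (fun s => bin_kl_expanded c (a * s))
    (a * (a * t - c) / (1 - (a * t) ^+ 2)).
Proof.
move=> /andP[at1 at2]; rewrite bin_kl_expanded_lnE.
have [d1 d2] := is_derive_affine a t.
have at_gt : 0 < 1 + a * t /\ 0 < 1 - a * t by lra.
have := is_deriveD (is_deriveD (is_derive_cst (bin_kl_expanded c 0) t 1)
  (is_derive_scaled_ln (- ((1 + c) / 2)) d1 at_gt.1))
  (is_derive_scaled_ln (- ((1 - c) / 2)) d2 at_gt.2).
move=> H; apply: is_derive_eq.
rewrite add0r (_ : 1 - (a * t) ^+ 2 = (1 + a * t) * (1 - a * t)); last by ring.
by field; case: at_gt => /gt_eqF -> /gt_eqF ->.
Qed.

Lemma continuous_bin_kl_expanded c a t :
  (c = -1 \/ -1 < a * t) -> (c = 1 \/ a * t < 1) ->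
  {for t, continuous (fun s => bin_kl_expanded c (a * s))}.
Proof.
move=> h1 h2; rewrite bin_kl_expanded_lnE.
have [d1 d2] := is_derive_affine a t.
apply: continuousD; first apply: continuousD; first exact: cst_continuous.
- by apply: (continuous_scaled_ln d1); lra.
- by apply: (continuous_scaled_ln d2); lra.
Qed.

Lemma bin_kl_expanded_mul1 c :
  (fun s => bin_kl_expanded c (1 * s)) = bin_kl_expanded c.
Proof. by apply/funext => s; rewrite mul1r. Qed.

Lemma is_derive_bin_kl_expanded1 c t : -1 < t < 1 ->
  is_derive t 1 (bin_kl_expanded c) ((t - c) / (1 - t ^+ 2)).
Proof.
have := @is_derive_bin_kl_expanded c 1 t.
by rewrite bin_kl_expanded_mul1 !mul1r.
Qed.

Lemma continuous_bin_kl_expanded1 c t :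
  (c = -1 \/ -1 < t) -> (c = 1 \/ t < 1) -> {for t, continuous (bin_kl_expanded c)}.
Proof.
have := @continuous_bin_kl_expanded c 1 t.
by rewrite bin_kl_expanded_mul1 !mul1r.
Qed.

Lemma bin_kl_expanded_same x : -1 <= x <= 1 -> bin_kl_expanded x x = 0.
Proof. by move=> hx; rewrite -bin_klE ?bin_kl_same //; lra. Qed.

(* As a function of y, the gap vanishes at x and its derivative has the sign
   of y - x. *)
Lemma bin_kl_expanded_contract a x y : -1 < a < 1 -> -1 <= x <= 1 -> -1 < y < 1 ->
  bin_kl_expanded (a * x) (a * y) <= a ^+ 2 * bin_kl_expanded x y.
Proof.
move=> /andP[a1 a2] hx /andP[y1 y2]; rewrite -subr_ge0.
pose h t := a ^+ 2 * bin_kl_expanded x t - bin_kl_expanded (a * x) (a * t).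
pose dh t := a ^+ 2 * ((t - x) / (1 - t ^+ 2))
             - a * (a * t - a * x) / (1 - (a * t) ^+ 2).
apply: (@ge0_derive_away _ h dh x y).
- move=> t ht; have ht1 : -1 < t < 1.
    by case/orP: ht => /andP[? ?]; apply/andP; split; lra.
  have hat : -1 < a * t < 1 by case/andP: ht1 => ? ?; apply/andP; split; nra.
  exact: is_deriveB (is_deriveZ (a ^+ 2) (is_derive_bin_kl_expanded1 x ht1))
    (is_derive_bin_kl_expanded (a * x) hat).
- move=> t ht; have [t1 t2] : -1 < t /\ t < 1.
    by case/orP: ht => /andP[? ?]; split; lra.
  have den1 : 0 < 1 - t ^+ 2 by nra.
  have den2 : 0 < 1 - (a * t) ^+ 2 by nra.
  have a_sq : 0 <= 1 - a ^+ 2 by nra.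
  have -> : (t - x) * dh t = a ^+ 2 * (1 - a ^+ 2) * (t * (t - x)) ^+ 2
                             / ((1 - t ^+ 2) * (1 - (a * t) ^+ 2)).
    by rewrite /dh; field; rewrite !gt_eqF.
  apply: divr_ge0; last by apply: mulr_ge0; exact: ltW.
  by apply: mulr_ge0; [apply: mulr_ge0; [exact: sqr_ge0|] | exact: sqr_ge0].
- move=> t ht; apply: continuousB; first apply: continuousM.
  + exact: cst_continuous.
  + by apply: continuous_bin_kl_expanded1; case/orP: ht => /andP[? ?]; lra.
  + by apply: continuous_bin_kl_expanded; right; case/orP: ht => /andP[? ?]; nra.
- by rewrite /h !bin_kl_expanded_same ?mulr0 ?subr0 //; nra.
Qed.

Lemma bin_kl_contract a x y : -1 <= a <= 1 -> -1 <= x <= 1 -> -1 < y < 1 ->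
  bin_kl (a * x) (a * y) <= a ^+ 2 * bin_kl x y.
Proof.
move=> /andP[a1 a2] hx /andP[y1 y2].
have [->|a_neq1] := eqVneq a 1; first by rewrite !mul1r expr1n mul1r.
have [->|a_neqN1] := eqVneq a (-1).
  by rewrite !mulN1r bin_klNN sqrrN expr1n mul1r.
have ha : -1 < a < 1 by rewrite !lt_neqAle a1 a2 a_neq1 eq_sym a_neqN1.
rewrite (bin_klE hx) ?bin_klE; try by right; lra.
- by apply: bin_kl_expanded_contract => //; apply/andP.
- by case/andP: hx => ? ?; apply/andP; split; nra.
- by right; case/andP: hx => ? ?; nra.
- by right; case/andP: hx => ? ?; nra.
Qed.

(* The sign [e] selects the direction of the comparison. *)
Lemma bin_kl_quadratic_cmp e k s y : -1 < s < 1 -> -1 < y < 1 ->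
  (forall t, (s < t < y) || (y < t < s) -> 0 <= e * (1 - 2 * k * (1 - t ^+ 2))) ->
  0 <= e * (bin_kl s y - k * (s - y) ^+ 2).
Proof.
move=> /andP[s1 s2] /andP[y1 y2] he.
pose g t := e * (bin_kl_expanded s t - k * (s - t) ^+ 2).
pose dg t := e * (t - s) * ((1 - t ^+ 2)^-1 - 2 * k).
have between_in t : (s <= t <= y) || (y <= t <= s) -> -1 < t < 1.
  by case/orP => /andP[? ?]; apply/andP; split; lra.
have hg t : -1 < t < 1 -> is_derive t 1 g (dg t).
  move=> ht; have := is_derive_bin_kl_expanded1 s ht.
  move=> H; apply: is_derive_eq.
  by rewrite /dg /GRing.scale /=; ring.
have open_in t : (s < t < y) || (y < t < s) -> -1 < t < 1.
  by move=> ht; apply: between_in; case/orP: ht => /andP[? ?]; lra.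
have : 0 <= g y.
  apply: (@ge0_derive_away _ g dg s y).
  - by move=> t /open_in /hg.
  - move=> t ht; have /andP[t1 t2] := open_in t ht.
    have den : 0 < 1 - t ^+ 2 by nra.
    have -> : (t - s) * dg t
        = (t - s) ^+ 2 / (1 - t ^+ 2) * (e * (1 - 2 * k * (1 - t ^+ 2))).
      by rewrite /dg; field; rewrite gt_eqF.
    by rewrite mulr_ge0 ?divr_ge0 ?sqr_ge0 ?he // ltW.
  - by move=> t /between_in /hg /is_derive_continuous.
  - by rewrite /g bin_kl_expanded_same ?subrr ?expr0n ?mulr0 ?subr0 ?mulr0 //; lra.
by rewrite /g bin_klE //; lra.
Qed.

Lemma bin_kl0_ge s : -1 < s < 1 -> s ^+ 2 / 2 <= bin_kl s 0.
Proof.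
move=> hs; have := @bin_kl_quadratic_cmp 1 (2^-1) s 0 hs ltac:(lra).
rewrite mul1r subr0 subr_ge0 => H; rewrite mulrC; apply: H => t _.
by rewrite mul1r divff ?mul1r ?subKr ?sqr_ge0 // pnatr_eq0.
Qed.

Lemma bin_kl0_le s : -1 < s < 1 -> bin_kl s 0 <= s ^+ 2 / (2 * (1 - s ^+ 2)).
Proof.
move=> hs; have den : 0 < 1 - s ^+ 2 by case/andP: hs => ? ?; nra.
have := @bin_kl_quadratic_cmp (-1) ((2 * (1 - s ^+ 2))^-1) s 0 hs ltac:(lra).
rewrite mulN1r oppr_ge0 subr0 subr_le0 => H; rewrite mulrC; apply: H => t ht.
have -> : -1 * (1 - 2 * (2 * (1 - s ^+ 2))^-1 * (1 - t ^+ 2))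
    = (s ^+ 2 - t ^+ 2) / (1 - s ^+ 2) by field; rewrite gt_eqF.
by apply: divr_ge0; [case/orP: ht => /andP[? ?]; nra | exact: ltW].
Qed.

End BinaryDivergence.

Section Alphabet.
Variable R : realType.

Lemma big_outs l (F : int -> R) :
  \sum_(y <- outs l) F y = F 0 + \sum_(1 <= i < l.+1) (F i%:Z + F (- i%:Z)).
Proof.
rewrite /outs big_map (_ : iota 0 _ = index_iota 0 (2 * l + 1)); last first.
  by rewrite /index_iota subn0.
elim: l F => [|l IH] F; first by rewrite big_nat1 big_geq // subrr addr0.
rewrite (_ : (2 * l.+1 + 1 = (2 * l + 1).+2)%N); last by lia.
rewrite big_nat_recl // big_nat_recr //=.
under eq_bigr => i _ do have -> : i.+1%:Z - l.+1%:Z = i%:Z - l%:Z by lia.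
rewrite IH [in RHS]big_nat_recr //=.
rewrite (_ : 0%:Z - l.+1%:Z = - l.+1%:Z); last by lia.
rewrite (_ : (2 * l + 1).+1%:Z - l.+1%:Z = l.+1%:Z); last by lia.
ring.
Qed.

Lemma mem_outs l i : (1 <= i <= l)%N -> (i%:Z \in outs l) && (- i%:Z \in outs l).
Proof.
move=> /andP[i1 il]; apply/andP; split; apply/mapP.
  by exists (i + l)%N; [rewrite mem_iota; lia | lia].
by exists (l - i)%N; [rewrite mem_iota; lia | lia].
Qed.

Lemma KLE (T : eqType) (s : seq T) (P Q : T -> R) :
  KL s P Q = \sum_(x <- s) kl_term (P x) (Q x).
Proof.
rewrite /KL big_mkcond; apply: eq_bigr => x _.
by case: eqP => [->|_] //; rewrite /kl_term mul0r.
Qed.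

Lemma out_distE (p : int -> R) PX y :
  out_dist p PX y = PX false * p y + PX true * p (- y).
Proof. by rewrite /out_dist big_cons big_seq1. Qed.

End Alphabet.

Section BisoChannel.
Variable R : realType.
Implicit Types (u v a b : R) (PX QX : bool -> R).

Definition bias u v := if u + v == 0 then 0 else (u - v) / (u + v).

Lemma bias_bound u v : 0 <= u -> 0 <= v -> -1 <= bias u v <= 1.
Proof.
move=> u0 v0; rewrite /bias; case: eqP => [_|/eqP w0]; first by lra.
have wp : 0 < u + v by lra.
by rewrite ler_pdivlMr // ler_pdivrMr //; apply/andP; split; lra.
Qed.

Lemma kl_term_pair u v a b : 0 <= u -> 0 <= v ->
  kl_term (a * u + (1 - a) * v) (b * u + (1 - b) * v)
  + kl_term (a * v + (1 - a) * u) (b * v + (1 - b) * u)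
  = (u + v) * bin_kl (bias u v * (2 * a - 1)) (bias u v * (2 * b - 1)).
Proof.
move=> u0 v0; rewrite /bias; have [w0|w0] := eqVneq (u + v) 0.
  have [-> ->] : u = 0 /\ v = 0 by lra.
  by rewrite !mulr0 !addr0 kl_term_same mul0r addr0.
set th := (u - v) / (u + v).
have mixE c : c * u + (1 - c) * v = (u + v) * ((1 + th * (2 * c - 1)) / 2).
  by rewrite /th; field.
have mixE' c : c * v + (1 - c) * u = (u + v) * ((1 - th * (2 * c - 1)) / 2).
  by rewrite /th; field.
by rewrite (mixE a) (mixE b) (mixE' a) (mixE' b) !kl_termZ // /bin_kl [RHS]mulrDr.
Qed.

Lemma KL_bin_dist PX QX : bin_dist PX -> bin_dist QX ->
  KL [:: false; true] PX QX = bin_kl (2 * PX false - 1) (2 * QX false - 1).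
Proof.
move=> [_ [_ P01]] [_ [_ Q01]]; rewrite KLE big_cons big_seq1 /bin_kl.
have -> : PX true = 1 - PX false by lra.
have -> : QX true = 1 - QX false by lra.
by congr (kl_term _ _ + kl_term _ _); lra.
Qed.

Variables (l : nat) (p : int -> R).
Hypothesis p_biso : biso l p.

Let w i := p i%:Z + p (- i%:Z).
Let th i := bias (p i%:Z) (p (- i%:Z)).

Lemma biso_ge0 i : (1 <= i < l.+1)%N -> 0 <= p i%:Z /\ 0 <= p (- i%:Z).
Proof.
move=> hi; have [_ [p_ge0 _]] := p_biso.
by have /andP[? ?] := mem_outs hi; split; apply: p_ge0.
Qed.

Lemma KL_out_dist PX QX : bin_dist PX -> bin_dist QX ->
  KL (outs l) (out_dist p PX) (out_dist p QX) =
  \sum_(1 <= i < l.+1)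
     w i * bin_kl (th i * (2 * PX false - 1)) (th i * (2 * QX false - 1)).
Proof.
move=> [P0 [P1 P01]] [Q0 [Q1 Q01]].
rewrite KLE big_outs !out_distE oppr0 -!mulrDl P01 Q01 !mul1r kl_term_same add0r.
rewrite big_nat_cond [RHS]big_nat_cond; apply: eq_bigr => i /andP[hi _].
have [pi_ge0 pNi_ge0] := biso_ge0 hi.
rewrite !out_distE !opprK -kl_term_pair //.
have -> : PX true = 1 - PX false by lra.
by have -> : QX true = 1 - QX false by lra.
Qed.

Lemma biso_formulaE : biso_formula l p = \sum_(1 <= i < l.+1) w i * th i ^+ 2.
Proof.
apply: eq_bigr => i _; rewrite /w /th /bias.
by case: eqP => [->|/eqP w0]; [rewrite mul0r | field].
Qed.

Lemma biso_formula_ge0 : 0 <= biso_formula l p.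
Proof.
rewrite biso_formulaE big_nat_cond; apply: sumr_ge0 => i /andP[hi _].
by have [? ?] := biso_ge0 hi; rewrite mulr_ge0 ?sqr_ge0 // addr_ge0.
Qed.

Lemma KL_ratio_le r : KL_ratios l p r -> r <= biso_formula l p.
Proof.
move=> [PX [QX [hP hQ ac KL_gt0 ->]]].
have [[P0 [P1 P01]] [Q0 [Q1 Q01]]] := (hP, hQ).
rewrite KL_bin_dist // in KL_gt0 *.
have x_neq_y : 2 * PX false - 1 != 2 * QX false - 1.
  by apply: contraTneq KL_gt0 => ->; rewrite bin_kl_same ltxx.
have /(_ isT) acF := ac false; have /(_ isT) acT := ac true.
have [QF0|QF_neq0] := eqVneq (QX false) 0.
  by rewrite QF0 acF ?eqxx in x_neq_y.
have [QF1|QF_neq1] := eqVneq (QX false) 1.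
  have PF1 : PX false = 1 by have := acT; lra.
  by rewrite QF1 PF1 eqxx in x_neq_y.
have y_in : -1 < 2 * QX false - 1 < 1.
  have : 0 < QX false < 1 by rewrite !lt_neqAle eq_sym QF_neq0 QF_neq1 Q0; lra.
  by case/andP => ? ?; apply/andP; split; lra.
rewrite ler_pdivrMr // KL_out_dist // biso_formulaE mulr_suml.
rewrite big_nat_cond [leRHS]big_nat_cond; apply: ler_sum => i /andP[hi _].
have [pi_ge0 pNi_ge0] := biso_ge0 hi.
rewrite -mulrA ler_wpM2l ?addr_ge0 //; apply: bin_kl_contract => //.
  exact: bias_bound.
by apply/andP; split; lra.
Qed.

Lemma KL_ratio_ge e : 0 < e < 1 ->
  exists2 r, KL_ratios l p r & biso_formula l p * (1 - e ^+ 2) <= r.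
Proof.
move=> /andP[e0 e1].
pose PX (b : bool) : R := if b then (1 - e) / 2 else (1 + e) / 2.
pose QX (_ : bool) : R := 2^-1.
have hP : bin_dist PX by rewrite /bin_dist /=; lra.
have hQ : bin_dist QX by rewrite /bin_dist /QX; lra.
have biasP : 2 * PX false - 1 = e by rewrite /=; lra.
have biasQ : 2 * QX false - 1 = 0 by rewrite /QX; lra.
have he : -1 < e < 1 by apply/andP; split; lra.
have KL_in_le := bin_kl0_le he.
have KL_in_gt0 : 0 < bin_kl e 0 by apply: lt_le_trans (bin_kl0_ge he); nra.
have KL_out_ge : biso_formula l p * (e ^+ 2 / 2)
    <= KL (outs l) (out_dist p PX) (out_dist p QX).
  rewrite KL_out_dist // biasP biasQ biso_formulaE mulr_suml.
  rewrite big_nat_cond [leRHS]big_nat_cond; apply: ler_sum => i /andP[hi _].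
  have [pi_ge0 pNi_ge0] := biso_ge0 hi.
  have /andP[th1 th2] := bias_bound pi_ge0 pNi_ge0.
  rewrite mulr0 -mulrA ler_wpM2l ?addr_ge0 // (_ : _ * (_ / 2) = (th i * e) ^+ 2 / 2).
    by apply: bin_kl0_ge; rewrite /th; apply/andP; split; nra.
  by rewrite /th exprMn mulrA.
exists (KL (outs l) (out_dist p PX) (out_dist p QX) / KL [:: false; true] PX QX).
  exists PX, QX; split; rewrite ?KL_bin_dist ?biasP ?biasQ //.
  by move=> b _ /eqP; rewrite invr_eq0 pnatr_eq0.
rewrite KL_bin_dist // biasP biasQ ler_pdivlMr //; apply: le_trans KL_out_ge.
have T_ge0 := biso_formula_ge0; have e2 : 0 < 1 - e ^+ 2 by nra.
apply: le_trans (ler_wpM2l (mulr_ge0 T_ge0 (ltW e2)) KL_in_le) _.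
by rewrite le_eqVlt; apply/orP; left; apply/eqP; field; rewrite gt_eqF.
Qed.

Lemma KL_ratio_approx d : 0 < d ->
  exists2 r, KL_ratios l p r & biso_formula l p - d <= r.
Proof.
move=> d_gt0; set T := biso_formula l p; have T_ge0 : 0 <= T := biso_formula_ge0.
pose e := Num.min 2^-1 (d / (T + 1)).
have e_gt0 : 0 < e by rewrite lt_min divr_gt0 //; lra.
have [e_le e_le'] : e <= 2^-1 /\ e <= d / (T + 1).
  by split; rewrite ge_min lexx ?orbT.
have [|r Sr ler] := KL_ratio_ge (e := e); first by apply/andP; split; lra.
exists r => //; apply: le_trans ler.
have : e * (T + 1) <= d by rewrite -ler_pdivlMr // ltr_wpDl.
have : 0 <= T * (e * (1 - e)) by rewrite !mulr_ge0 //; lra.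
rewrite -/T; lra.
Qed.

End BisoChannel.

Theorem mainTheorem1 (R : realType) (l : nat) (p : int -> R) :
  biso l p -> eta_KL l p = biso_formula l p.
Proof.
move=> p_biso; apply: sup_eq_approx => [r|]; first exact: KL_ratio_le.
exact: KL_ratio_approx.
Qed.
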